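(* Let $p\colon X\to B$ be a Boolean set and let $G$ be an ultrafilter of $(X,\le)$. If $x,y\in X$ satisfy $x\sim y$ and $x\vee y\in G$, then $x\in G$ or $y\in G$.
   Context: Convention: a ''Boolean algebra'' means a generalized Boolean algebra (relatively complemented distributive lattice with $0$). Presheaf of sets over a meet semilattice $E$: pairwise disjoint sets $X_e$, restriction maps $x\mapsto x|^e_f$ for $e\ge f$ with $|^e_e=\mathrm{id}$ and $(x|^e_f)|^f_g=x|^e_g$; $p(x)=e$ iff $x\in X_e$; global support: all $X_e\neq\emptyset$. Order: $x\le y$ iff $p(x)\le p(y)$ and $x=y|^{p(y)}_{p(x)}$. Compatibility $x\sim y$: $x\wedge y$ exists and $p(x\wedge y)=p(x)\wedge p(y)$. A Boolean set is a presheaf $p\colon X\to B$ with global support over a Boolean algebra $B$ such that $(X,\le)$ has least element $0$, compatible pairs have joins, and $p(x)=0\Rightarrow x=0$. In a poset, a filter is a non-empty, down directed, upwardly closed subset; an ultrafilter is a maximal filter among those not equal to the whole poset. *)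

From HB Require Import structures.
From mathcomp Require Import all_boot all_order.
Set Implicit Arguments. Unset Strict Implicit. Unset Printing Implicit Defensive.
Import Order.Theory.
Local Open Scope order_scope.

(* A generalized Boolean algebra (relatively complemented distributive lattice
   with 0) is a [cbDistrLatticeType d] in MathComp.

   A presheaf of sets over B is represented by a carrier type X (the disjoint
   union of the X_e), the support map p : X -> B (p x = e iff x \in X_e) and a
   total restriction function res : X -> B -> X, where [res x f] is meant to be
   x|^{p x}_f and is only constrained when f <= p x. *)
Section BooleanSets.
Context {d : Order.disp_t} {B : cbDistrLatticeType d} {X : Type}.
Variables (p : X -> B) (res : X -> B -> X).

Definition is_presheaf : Prop :=
  [/\ (forall x f, f <= p x -> p (res x f) = f),
      (forall x, res x (p x) = x) &
      (forall x f g, g <= f -> f <= p x -> res (res x f) g = res x g)].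

Definition global_support : Prop := forall e : B, exists x, p x = e.

Definition leX (x y : X) : Prop := p x <= p y /\ x = res y (p x).

Definition is_meet (x y m : X) : Prop :=
  [/\ leX m x, leX m y & forall z, leX z x -> leX z y -> leX z m].

Definition is_join (x y j : X) : Prop :=
  [/\ leX x j, leX y j & forall z, leX x z -> leX y z -> leX j z].

Definition is_least (z : X) : Prop := forall x, leX z x.

Definition compatible (x y : X) : Prop :=
  exists m, is_meet x y m /\ p m = p x `&` p y.

Definition boolean_set : Prop :=
  [/\ is_presheaf, global_support,
      (exists z, is_least z),
      (forall x y, compatible x y -> exists j, is_join x y j) &
      (forall x, p x = \bot -> is_least x)].

Definition is_filter (G : X -> Prop) : Prop :=
  [/\ (exists x, G x),
      (forall a b, G a -> G b -> exists c, [/\ G c, leX c a & leX c b]) &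
      (forall a b, G a -> leX a b -> G b)].

Definition proper (G : X -> Prop) : Prop := exists x, ~ G x.

Definition is_ultrafilter (G : X -> Prop) : Prop :=
  [/\ is_filter G, proper G &
      forall H : X -> Prop, is_filter H -> proper H ->
        (forall x, G x -> H x) -> forall x, H x -> G x].

End BooleanSets.

(* An ultrafilter G containing j "decides" every x <= j: either x is in G, or
   some c in G below j has support disjoint from that of x.  Otherwise the
   restrictions j|_(p c /\ p x), c in G below j, would generate a proper filter
   containing both G and x.  If neither x nor y were in G, a common lower bound
   in G of the two witnesses would have support below p j <= p x \/ p y yet
   disjoint from both, hence support 0; it would be the least element, making
   G the whole poset. *)
From HB Require Import structures.
From mathcomp Require Import all_boot all_order.
From Stdlib Require Import Classical.

Set Implicit Arguments.
Unset Strict Implicit.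
Unset Printing Implicit Defensive.

Import Order.Theory.
Local Open Scope order_scope.

Section BooleanSetFilters.
Context {d : Order.disp_t} {B : cbDistrLatticeType d} {X : Type}.
Variables (p : X -> B) (res : X -> B -> X).
Hypothesis presheaf : is_presheaf p res.

Local Notation "u <=X v" := (leX p res u v) (at level 70).

Lemma p_res x f : f <= p x -> p (res x f) = f.
Proof. by case: presheaf => pr _ _; apply: pr. Qed.

Lemma res_p x : res x (p x) = x.
Proof. by case: presheaf => _ rp _; apply: rp. Qed.

Lemma res_res x f g : g <= f -> f <= p x -> res (res x f) g = res x g.
Proof. by case: presheaf => _ _ rr; apply: rr. Qed.

Lemma leX_refl u : u <=X u.
Proof. by split; rewrite ?res_p. Qed.

Lemma leX_trans u v w : u <=X v -> v <=X w -> u <=X w.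
Proof.
move=> [uv eu] [vw ev]; split; first exact: le_trans vw.
by rewrite {1}eu {1}ev res_res.
Qed.

Lemma leX_res w f f' : f <= f' -> f' <= p w -> res w f <=X res w f'.
Proof.
move=> ff' f'w; have fw := le_trans ff' f'w.
by split; rewrite !p_res // res_res.
Qed.

Lemma join_support_le x y j : is_join p res x y j -> p j <= p x `|` p y.
Proof.
move=> [[xj ex] [yj ey] jlub]; have xyj : p x `|` p y <= p j by rewrite leUx xj.
have [+ _] : j <=X res j (p x `|` p y).
  by apply: jlub; [rewrite {1}ex | rewrite {1}ey]; apply: leX_res; rewrite ?leUl ?leUr.
by rewrite p_res.
Qed.

Section Ultrafilter.
Variable G : X -> Prop.
Hypothesis ultra : is_ultrafilter p res G.

(* For c, x <= j, the restriction j|_(p c /\ p x) is the meet of c and x, so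
   this is the filter generated by G and x. *)
Definition adjoin_filter (j x w : X) : Prop :=
  exists2 c, G c /\ c <=X j & res j (p c `&` p x) <=X w.

Lemma adjoin_filter_is_filter j x : G j -> is_filter p res (adjoin_filter j x).
Proof.
case: ultra => -[_ Gdir _] _ _ Gj.
have meet_le c : c <=X j -> p c `&` p x <= p j.
  by move=> [cj _]; apply: le_trans cj; apply: leIl.
split.
- by exists (res j (p j `&` p x)), j; [split=> // | ]; apply: leX_refl.
- move=> w1 w2 [c1 [Gc1 c1j] l1] [c2 [Gc2 c2j] l2].
  have [c [Gc cc1 cc2]] := Gdir _ _ Gc1 Gc2.
  have cj : c <=X j by apply: leX_trans cc1 c1j.
  exists (res j (p c `&` p x)); split; first by exists c; last apply: leX_refl.
  + by apply: leX_trans l1; apply: leX_res (meet_le _ c1j); apply: leI2 => //; case: cc1.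
  + by apply: leX_trans l2; apply: leX_res (meet_le _ c2j); apply: leI2 => //; case: cc2.
- by move=> a b [c Gc ca] ab; exists c => //; apply: leX_trans ab.
Qed.

Lemma ultrafilter_adjoin j x : G j -> x <=X j ->
  G x \/ exists c, [/\ G c, c <=X j & p c `&` p x = \bot].
Proof.
move=> Gj [xj ex]; have [[_ Gdir _] _ Gmax] := ultra.
have [disj | no_disj] := classic (exists c, [/\ G c, c <=X j & p c `&` p x = \bot]).
  by right.
left; apply: (Gmax (adjoin_filter j x)); first exact: adjoin_filter_is_filter.
- exists (res j \bot) => -[c [Gc cj] [+ _]].
  have cxj : p c `&` p x <= p j by apply: le_trans (leIr _ _) xj.
  rewrite !p_res ?le0x // lex0 => /eqP cx0.
  by apply: no_disj; exists c.
- move=> g Gg; have [c [Gc cg cj]] := Gdir _ _ Gg Gj.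
  exists c => //; apply: leX_trans cg; case: (cj) => cj' ec; rewrite {2}ec.
  by apply: leX_res; rewrite ?leIl.
- exists j; first by split=> //; apply: leX_refl.
  by rewrite (meet_idPr xj) {2}ex; apply: leX_refl.
Qed.

End Ultrafilter.
End BooleanSetFilters.

Theorem lemma3p7 (d : Order.disp_t) (B : cbDistrLatticeType d) (X : Type)
  (p : X -> B) (res : X -> B -> X) (G : X -> Prop) :
  boolean_set p res -> is_ultrafilter p res G ->
  forall x y j : X, compatible p res x y -> is_join p res x y j -> G j ->
  G x \/ G y.
Proof.
move=> [PS _ _ _ supp0_least] ultra x y j _ xyj Gj.
have [[_ Gdir Gup] [w nGw] _] := ultra.
have [xj yj _] := xyj.
have [Gx | [c1 [Gc1 c1j cx0]]] := ultrafilter_adjoin PS ultra Gj xj; first by left.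
have [Gy | [c2 [Gc2 c2j cy0]]] := ultrafilter_adjoin PS ultra Gj yj; first by right.
have [c [Gc [cc1 _] [cc2 _]]] := Gdir _ _ Gc1 Gc2.
have cxy : p c <= p x `|` p y.
  apply: le_trans (join_support_le PS xyj).
  by apply: le_trans cc1 _; case: c1j.
have pc0 : p c = \bot.
  apply/eqP; rewrite -lex0 -(meet_idPl cxy) meetUr leUx.
  by rewrite -{1}cx0 -cy0 !leI2.
by case: nGw; apply: Gup Gc _; apply: supp0_least.
Qed.
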